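(* For every set of formulas $\Gamma$ and formula $\varphi$: $\Gamma\vdash_{\mathsf{NeL}^{\mathrm{ECQ}}}\varphi$ iff $\Gamma\models_{\mathfrak{N}_w^{S}}\varphi$, where $\mathsf{NeL}^{\mathrm{ECQ}}$ is $\mathsf{NeL}$ extended by the rule scheme (ECQ) $\varphi,\varphi^{*}\vdash\psi$, and $\mathfrak{N}_w^{S}$ is the class of $\mathfrak{N}_w$-models $(\mathbf A,\perp,\{\mathsf{t},\mathsf{f}\})$ such that for all $x,z\in A$, $x\perp\mathsf{t}$ and $x\perp\mathsf{f}$ imply $z\perp\mathsf{f}$.
   Context: Formulas are built from a countably infinite set of variables using binary $\otimes,\circ$ and unary ${}^{*}$; $\mathbf{Fm}$ is the formula algebra. Abbreviations (also term operations): $\varphi\Rightarrow\psi:=(\varphi\circ\psi^{*})^{*}$; $\varphi\Leftrightarrow\psi:=(\varphi\Rightarrow\psi)\otimes(\psi\Rightarrow\varphi)$; $\varphi\not\Leftrightarrow\psi:=(\varphi\Leftrightarrow\psi)^{*}$; $\varphi\not\Leftrightarrow\psi\not\Leftrightarrow\chi:=((\varphi\not\Leftrightarrow\psi)\otimes(\varphi\not\Leftrightarrow\chi))\otimes(\psi\not\Leftrightarrow\chi)$. $\mathsf{NeL}$: axiom schemes (A1) $\varphi\Rightarrow\varphi$; (A2) $(\varphi\circ\psi)\Rightarrow(\psi\circ\varphi)$; (A3) $\varphi\Rightarrow\varphi^{**}$; (A4) $(\varphi\Rightarrow\psi)\Rightarrow(\varphi\circ\psi)$; (A5) $(\varphi\otimes\psi)\Leftrightarrow(\psi\otimes\varphi)$;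 (A6) $((\varphi\otimes\psi)\Rightarrow\chi)\Rightarrow((\varphi\otimes\chi^{*})\Rightarrow\psi^{*})$; (A7) $(\varphi\not\Leftrightarrow\psi\not\Leftrightarrow\chi)\Rightarrow((\varphi\Rightarrow\psi)\Rightarrow((\psi\Rightarrow\chi)\Rightarrow(\varphi\Rightarrow\chi)))$; rules on arbitrary formulas: $\varphi\Rightarrow\psi,\varphi/\psi$; $\varphi,\psi/\varphi\otimes\psi$; $\varphi\Leftrightarrow\psi,\chi/\chi'$ ($\chi'$ from $\chi$ replacing one or more occurrences of $\varphi$ by $\psi$); $\varphi\otimes\psi/\varphi$. A weak $\mathcal{N}$-algebra is an algebra $(A,\otimes,\circ,{}^{*})$ of type $(2,2,1)$ with $\otimes,\circ$ commutative, $x^{**}=x$, $(x\otimes y)\circ z=(x\otimes z)\circ y$. With $\mathsf{t}\ne\mathsf{f}$ symbols not in $A$, $\overline A=A\cup\{\mathsf{t},\mathsf{f}\}$, an $\mathfrak{N}_w$-model is $(\mathbf A,\perp,\{\mathsf{t},\mathsf{f}\})$, $\mathbf A$ a weak $\mathcal{N}$-algebra, $\perp\subseteq\overline A\times\overline A$, such that for all $x,y,z\in A$: (a) $x\perp x^{*}$; (b) $x\perp y^{*}$ and $y\perp x^{*}$ imply $x=y$; (c) $x\perp y$ iff $x\circ y\perp\mathsf{t}$; (d) $x\perp\mathsf{t}$ iff $x^{*}\perp\mathsf{f}$; (e) $x\perp\mathsf{f}$ and $y\perp\mathsf{f}$ iff $x\otimes y\perp\mathsf{f}$; (f) $(x\circ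 y^{*})^{*}\perp(x\circ y)^{*}$; (g) $x\perp y$ and $x\perp\mathsf{f}$ imply $y\perp\mathsf{t}$; (h) $(x\not\Leftrightarrow y\not\Leftrightarrow z)\perp((x\Rightarrow y)\Rightarrow((y\Rightarrow z)\Rightarrow(x\Rightarrow z)))^{*}$. $F_\perp=\{a\in A:a\perp\mathsf{f}\}$. For a class $K$ of such models, $\Gamma\models_K\varphi$ iff there is a finite $\Gamma'\subseteq\Gamma$ such that for every model in $K$ and every homomorphism $h:\mathbf{Fm}\to\mathbf A$, $h(\Gamma')\subseteq F_\perp$ implies $h(\varphi)\in F_\perp$. *)

From Stdlib Require Import List.
Import ListNotations.

(** * Formulas: variables (nat), binary ⊗ (Ot), binary ∘ (Oc), unary * (St). *)
Inductive fm : Type :=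
| Var : nat -> fm
| Ot : fm -> fm -> fm
| Oc : fm -> fm -> fm
| St : fm -> fm.

Definition Imp (a b : fm) : fm := St (Oc a (St b)).
Definition Iff (a b : fm) : fm := Ot (Imp a b) (Imp b a).
Definition NIff (a b : fm) : fm := St (Iff a b).
Definition NIff3 (a b c : fm) : fm :=
  Ot (Ot (NIff a b) (NIff a c)) (NIff b c).

(** [rep a b c c' one]: c' is obtained from c by replacing some occurrences
    of a by b; [one = true] iff at least one occurrence was replaced. *)
Inductive rep (a b : fm) : fm -> fm -> bool -> Prop :=
| rep_here : rep a b a b true
| rep_var : forall n, rep a b (Var n) (Var n) false
| rep_ot : forall l l' r r' f1 f2,
    rep a b l l' f1 -> rep a b r r' f2 -> rep a b (Ot l r) (Ot l' r') (orb f1 f2)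
| rep_oc : forall l l' r r' f1 f2,
    rep a b l l' f1 -> rep a b r r' f2 -> rep a b (Oc l r) (Oc l' r') (orb f1 f2)
| rep_st : forall l l' f1,
    rep a b l l' f1 -> rep a b (St l) (St l') f1.

Inductive axiomNeL : fm -> Prop :=
| A1 : forall p, axiomNeL (Imp p p)
| A2 : forall p q, axiomNeL (Imp (Oc p q) (Oc q p))
| A3 : forall p, axiomNeL (Imp p (St (St p)))
| A4 : forall p q, axiomNeL (Imp (Imp p q) (Oc p q))
| A5 : forall p q, axiomNeL (Iff (Ot p q) (Ot q p))
| A6 : forall p q c,
    axiomNeL (Imp (Imp (Ot p q) c) (Imp (Ot p (St c)) (St q)))
| A7 : forall p q c,
    axiomNeL (Imp (NIff3 p q c)
                  (Imp (Imp p q) (Imp (Imp q c) (Imp p c)))).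

Inductive derivable (Gamma : fm -> Prop) : fm -> Prop :=
| d_hyp : forall p, Gamma p -> derivable Gamma p
| d_ax : forall p, axiomNeL p -> derivable Gamma p
| d_mp : forall p q,
    derivable Gamma (Imp p q) -> derivable Gamma p -> derivable Gamma q
| d_adj : forall p q,
    derivable Gamma p -> derivable Gamma q -> derivable Gamma (Ot p q)
| d_repl : forall p q c c',
    derivable Gamma (Iff p q) -> derivable Gamma c ->
    rep p q c c' true -> derivable Gamma c'
| d_simp : forall p q, derivable Gamma (Ot p q) -> derivable Gamma p
| d_ecq : forall p q,
    derivable Gamma p -> derivable Gamma (St p) -> derivable Gamma q.

Record alg : Type := {
  carrier :> Type;
  aot : carrier -> carrier -> carrier;
  aoc : carrier -> carrier -> carrier;
  ast : carrier -> carrier }.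

Definition aimp (A : alg) (x y : A) : A := ast A (aoc A x (ast A y)).
Definition aiff (A : alg) (x y : A) : A := aot A (aimp A x y) (aimp A y x).
Definition aniff (A : alg) (x y : A) : A := ast A (aiff A x y).
Definition aniff3 (A : alg) (x y z : A) : A :=
  aot A (aot A (aniff A x y) (aniff A x z)) (aniff A y z).

Definition weak_N_algebra (A : alg) : Prop :=
  (forall x y : A, aot A x y = aot A y x) /\
  (forall x y : A, aoc A x y = aoc A y x) /\
  (forall x : A, ast A (ast A x) = x) /\
  (forall x y z : A, aoc A (aot A x y) z = aoc A (aot A x z) y).

Inductive ext (A : Type) : Type :=
| El : A -> ext A
| Tt : ext A
| Ff : ext A.
Arguments El {A} _.
Arguments Tt {A}.
Arguments Ff {A}.

Definition Nw_model (A : alg) (perp : ext A -> ext A -> Prop) : Prop :=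
  weak_N_algebra A /\
  (forall x : A, perp (El x) (El (ast A x))) /\                            (* a *)
  (forall x y : A, perp (El x) (El (ast A y)) -> perp (El y) (El (ast A x)) ->
                   x = y) /\                                              (* b *)
  (forall x y : A, perp (El x) (El y) <-> perp (El (aoc A x y)) Tt) /\     (* c *)
  (forall x : A, perp (El x) Tt <-> perp (El (ast A x)) Ff) /\             (* d *)
  (forall x y : A, (perp (El x) Ff /\ perp (El y) Ff) <->
                   perp (El (aot A x y)) Ff) /\                           (* e *)
  (forall x y : A, perp (El (ast A (aoc A x (ast A y))))
                        (El (ast A (aoc A x y)))) /\                      (* f *)
  (forall x y : A, perp (El x) (El y) -> perp (El x) Ff ->
                   perp (El y) Tt) /\                                     (* g *)
  (forall x y z : A,
      perp (El (aniff3 A x y z))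
           (El (ast A (aimp A (aimp A x y)
                         (aimp A (aimp A y z) (aimp A x z)))))).          (* h *)

Definition S_condition (A : alg) (perp : ext A -> ext A -> Prop) : Prop :=
  forall x z : A, perp (El x) Tt -> perp (El x) Ff -> perp (El z) Ff.

Definition F_perp (A : alg) (perp : ext A -> ext A -> Prop) (a : A) : Prop :=
  perp (El a) Ff.

Definition is_hom (A : alg) (h : fm -> A) : Prop :=
  (forall p q, h (Ot p q) = aot A (h p) (h q)) /\
  (forall p q, h (Oc p q) = aoc A (h p) (h q)) /\
  (forall p, h (St p) = ast A (h p)).

Definition models_NwS (Gamma : fm -> Prop) (phi : fm) : Prop :=
  exists Gamma' : list fm,
    (forall g, In g Gamma' -> Gamma g) /\
    forall (A : alg) (perp : ext A -> ext A -> Prop),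
      Nw_model A perp -> S_condition A perp ->
      forall h : fm -> A, is_hom A h ->
        (forall g, In g Gamma' -> F_perp A perp (h g)) ->
        F_perp A perp (h phi).

(* Soundness is checked rule by rule: condition (a) validates A1-A3, (f)
   validates A4, (e) validates A5 and adjunction/simplification, the weak
   exchange law validates A6, (h) validates A7, (c), (d) and (g) validate modus
   ponens, (b) turns a valid [p <=> q] into an equality [h p = h q] so that
   replacement is sound, and the S-condition validates (ECQ).
   Completeness uses the Lindenbaum-Tarski model: formulas modulo provable
   equivalence, with [x ⊥ y] iff [⊢ (x ∘ y)*], [x ⊥ t] iff [⊢ x*] and
   [x ⊥ f] iff [⊢ x]; the rules of NeL make it an N_w-model and (ECQ) is
   exactly its S-condition. *)

From Stdlib Require Import List IndefiniteDescription FunctionalExtensionality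
  PropExtensionality ProofIrrelevance.
Import ListNotations.

Section Homomorphisms.

Variables (A : alg) (h : fm -> A).
Hypothesis h_hom : is_hom A h.

Lemma hom_Imp p q : h (Imp p q) = aimp A (h p) (h q).
Proof.
  destruct h_hom as (_ & hOc & hSt).
  unfold Imp, aimp. now rewrite hSt, hOc, hSt.
Qed.

Lemma hom_Iff p q : h (Iff p q) = aiff A (h p) (h q).
Proof.
  destruct h_hom as (hOt & _).
  unfold Iff, aiff. now rewrite hOt, !hom_Imp.
Qed.

Lemma hom_NIff3 p q r : h (NIff3 p q r) = aniff3 A (h p) (h q) (h r).
Proof.
  destruct h_hom as (hOt & _ & hSt).
  unfold NIff3, NIff, aniff3, aniff. now rewrite !hOt, !hSt, !hom_Iff.
Qed.

Lemma hom_rep p q c c' b : h p = h q -> rep p q c c' b -> h c = h c'.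
Proof.
  destruct h_hom as (hOt & hOc & hSt). intros Epq R.
  induction R; rewrite ?hOt, ?hOc, ?hSt; congruence.
Qed.

End Homomorphisms.

(** * Soundness *)

Section NwModel.

Variables (A : alg) (perp : ext A -> ext A -> Prop).
Hypothesis model : Nw_model A perp.

Lemma F_perp_aimp x y : F_perp A perp (aimp A x y) <-> perp (El x) (El (ast A y)).
Proof.
  destruct model as (_ & _ & _ & perp_Tt & Tt_Ff & _).
  unfold F_perp, aimp. now rewrite <- Tt_Ff, <- perp_Tt.
Qed.

Lemma F_perp_aimp_refl x : F_perp A perp (aimp A x x).
Proof. destruct model as (_ & perp_ast & _). apply F_perp_aimp, perp_ast. Qed.

Lemma F_perp_aot x y : F_perp A perp (aot A x y) <-> F_perp A perp x /\ F_perp A perp y.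
Proof. destruct model as (_ & _ & _ & _ & _ & Ff_aot & _). unfold F_perp. now rewrite Ff_aot. Qed.

Lemma F_perp_mp x y : F_perp A perp (aimp A x y) -> F_perp A perp x -> F_perp A perp y.
Proof.
  destruct model as ((_ & _ & ast_ast & _) & _ & _ & _ & Tt_Ff & _ & _ & Ff_Tt & _).
  intros Fxy Fx. apply F_perp_aimp in Fxy.
  apply (Ff_Tt _ _ Fxy), Tt_Ff in Fx. now rewrite ast_ast in Fx.
Qed.

Lemma F_perp_aiff_eq x y : F_perp A perp (aiff A x y) -> x = y.
Proof.
  destruct model as (_ & _ & perp_antisym & _).
  intros [Fxy Fyx]%F_perp_aot.
  now apply perp_antisym; apply F_perp_aimp.
Qed.

Lemma F_perp_axiom h p : is_hom A h -> axiomNeL p -> F_perp A perp (h p).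
Proof.
  intros h_hom ax.
  destruct model as ((aot_comm & aoc_comm & ast_ast & exchange) & perp_ast & _
                     & _ & _ & _ & perp_aimp_aoc & _ & perp_A7).
  destruct h_hom as (hOt & hOc & hSt).
  destruct ax; rewrite ?hom_Imp, ?hom_Iff, ?hom_NIff3, ?hOt, ?hOc, ?hSt by easy.
  - apply F_perp_aimp_refl.
  - rewrite (aoc_comm (h q)). apply F_perp_aimp_refl.
  - rewrite ast_ast. apply F_perp_aimp_refl.
  - apply F_perp_aimp, perp_aimp_aoc.
  - rewrite (aot_comm (h q)). apply F_perp_aot; split; apply F_perp_aimp_refl.
  - (* both sides reduce to [u* ⊥ u] with [u = (p ⊗ q) ∘ c*] *)
    apply F_perp_aimp. unfold aimp. rewrite !ast_ast, (exchange _ (ast A (h c))).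
    rewrite <- (ast_ast (aoc A (aot A (h p) (h q)) (ast A (h c)))) at 2.
    apply perp_ast.
  - apply F_perp_aimp, perp_A7.
Qed.

Lemma F_perp_ecq x y :
  S_condition A perp -> F_perp A perp x -> F_perp A perp (ast A x) -> F_perp A perp y.
Proof.
  destruct model as (_ & _ & _ & _ & Tt_Ff & _).
  intros S Fx Fnx. apply Tt_Ff in Fnx. exact (S _ _ Fnx Fx).
Qed.

End NwModel.

Lemma models_NwS_lift2 G p q r :
  models_NwS G p -> models_NwS G q ->
  (forall A perp, Nw_model A perp -> S_condition A perp ->
     forall h, is_hom A h ->
     F_perp A perp (h p) -> F_perp A perp (h q) -> F_perp A perp (h r)) ->
  models_NwS G r.
Proof.
  intros [Lp [Gp Vp]] [Lq [Gq Vq]] rule. exists (Lp ++ Lq). split.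
  - intros g [? | ?]%in_app_or; auto.
  - intros A perp M S h h_hom F. apply (rule A perp M S h h_hom).
    + apply Vp; auto. intros g Hg. apply F, in_or_app; auto.
    + apply Vq; auto. intros g Hg. apply F, in_or_app; auto.
Qed.

Lemma soundness G phi : derivable G phi -> models_NwS G phi.
Proof.
  induction 1 as [p Gp | p ax | p q _ IHpq _ IHp | p q _ IHp _ IHq
                  | p q c c' _ IHpq _ IHc R | p q _ IHpq | p q _ IHp _ IHnp].
  - exists [p]. split.
    + now intros g [<- | []].
    + intros A perp _ _ h _ F. apply F. now left.
  - exists []. split; [easy|]. intros A perp M _ h h_hom _.
    now apply F_perp_axiom.
  - apply (models_NwS_lift2 G _ _ _ IHpq IHp).
    intros A perp M _ h h_hom. rewrite hom_Imp by easy. apply F_perp_mp, M.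
  - apply (models_NwS_lift2 G _ _ _ IHp IHq).
    intros A perp M _ h (hOt & _) Fp Fq. rewrite hOt. now apply F_perp_aot.
  - apply (models_NwS_lift2 G _ _ _ IHpq IHc).
    intros A perp M _ h h_hom Fpq Fc. rewrite hom_Iff in Fpq by easy.
    apply F_perp_aiff_eq in Fpq; [|easy].
    unfold F_perp. now rewrite <- (hom_rep A h h_hom p q c c' true Fpq R).
  - apply (models_NwS_lift2 G _ _ _ IHpq IHpq).
    intros A perp M _ h (hOt & _) F _. rewrite hOt in F. now apply (F_perp_aot A perp M) in F.
  - apply (models_NwS_lift2 G _ _ _ IHp IHnp).
    intros A perp M S h (_ & _ & hSt). rewrite hSt. now apply F_perp_ecq.
Qed.

(** * Provable equivalence *)

Lemma rep_refl a b c : rep a b c c false.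
Proof.
  induction c.
  - apply rep_var.
  - exact (rep_ot a b _ _ _ _ false false IHc1 IHc2).
  - exact (rep_oc a b _ _ _ _ false false IHc1 IHc2).
  - exact (rep_st a b _ _ _ IHc).
Qed.

Lemma rep_Iff_r a b p q q' :
  rep a b q q' true -> rep a b (Iff p q) (Iff p q') true.
Proof.
  intros R. unfold Iff, Imp.
  exact (rep_ot a b _ _ _ _ _ _
           (rep_st a b _ _ _ (rep_oc a b _ _ _ _ _ _ (rep_refl a b p) (rep_st a b _ _ _ R)))
           (rep_st a b _ _ _ (rep_oc a b _ _ _ _ _ _ R (rep_st a b _ _ _ (rep_refl a b p))))).
Qed.

Section ProvableEquivalence.

Variable G : fm -> Prop.

Lemma derivable_Iff p q : derivable G (Iff p q) -> derivable G p -> derivable G q.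
Proof. intros Hpq Hp. exact (d_repl G p q p q Hpq Hp (rep_here p q)). Qed.

Lemma Iff_refl p : derivable G (Iff p p).
Proof. apply d_adj; apply d_ax, A1. Qed.

Lemma Iff_sym p q : derivable G (Iff p q) -> derivable G (Iff q p).
Proof. apply derivable_Iff, d_ax, A5. Qed.

Lemma Iff_trans p q r :
  derivable G (Iff p q) -> derivable G (Iff q r) -> derivable G (Iff p r).
Proof. intros Hpq Hqr. exact (d_repl G q r _ _ Hqr Hpq (rep_Iff_r q r p q r (rep_here q r))). Qed.

Lemma Iff_rep p q c c' : derivable G (Iff p q) -> rep p q c c' true -> derivable G (Iff c c').
Proof. intros Hpq R. exact (d_repl G p q _ _ Hpq (Iff_refl c) (rep_Iff_r p q c c c' R)). Qed.

Lemma Iff_St p q : derivable G (Iff p q) -> derivable G (Iff (St p) (St q)).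
Proof. intros Hpq. apply (Iff_rep p q); [easy | apply rep_st, rep_here]. Qed.

Lemma Iff_Ot p p' q q' : derivable G (Iff p p') -> derivable G (Iff q q') ->
  derivable G (Iff (Ot p q) (Ot p' q')).
Proof.
  intros Hp Hq. apply Iff_trans with (Ot p' q).
  - exact (Iff_rep p p' _ _ Hp (rep_ot _ _ _ _ _ _ _ _ (rep_here p p') (rep_refl p p' q))).
  - exact (Iff_rep q q' _ _ Hq (rep_ot _ _ _ _ _ _ _ _ (rep_refl q q' p') (rep_here q q'))).
Qed.

Lemma Iff_Oc p p' q q' : derivable G (Iff p p') -> derivable G (Iff q q') ->
  derivable G (Iff (Oc p q) (Oc p' q')).
Proof.
  intros Hp Hq. apply Iff_trans with (Oc p' q).
  - exact (Iff_rep p p' _ _ Hp (rep_oc _ _ _ _ _ _ _ _ (rep_here p p') (rep_refl p p' q))).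
  - exact (Iff_rep q q' _ _ Hq (rep_oc _ _ _ _ _ _ _ _ (rep_refl q q' p') (rep_here q q'))).
Qed.

Lemma Iff_Oc_comm p q : derivable G (Iff (Oc p q) (Oc q p)).
Proof. apply d_adj; apply d_ax, A2. Qed.

Lemma Iff_St_St p : derivable G (Iff p (St (St p))).
Proof.
  apply d_adj; [apply d_ax, A3|].
  apply (derivable_Iff (Imp (St p) (St p))); [|apply d_ax, A1].
  apply Iff_St, Iff_Oc_comm.
Qed.

Ltac Iff_congr :=
  first [ apply Iff_refl | assumption
        | apply Iff_St; Iff_congr
        | apply Iff_Ot; Iff_congr
        | apply Iff_Oc; Iff_congr ].

Lemma contraposition p q : derivable G (Imp (St p) (St q)) -> derivable G (Imp q p).
Proof.
  intros H. apply (derivable_Iff (St (Oc (St p) q))); [apply Iff_St, Iff_Oc_comm|].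
  pose proof (Iff_sym _ _ (Iff_St_St q)).
  revert H. apply derivable_Iff. Iff_congr.
Qed.

Lemma Imp_exchange p q c : derivable G (Imp (Oc (Ot p c) q) (Oc (Ot p q) c)).
Proof.
  pose proof (contraposition _ _ (d_ax G _ (A6 p q (St c)))) as H.
  pose proof (Iff_sym _ _ (Iff_St_St q)). pose proof (Iff_sym _ _ (Iff_St_St c)).
  revert H. apply derivable_Iff. Iff_congr.
Qed.

Lemma Iff_exchange p q c : derivable G (Iff (Oc (Ot p q) c) (Oc (Ot p c) q)).
Proof. apply d_adj; apply Imp_exchange. Qed.

Lemma derivable_Ot p q : derivable G (Ot p q) <-> derivable G p /\ derivable G q.
Proof.
  split.
  - intros Hpq. split; [now apply d_simp with q|].
    apply d_simp with p. revert Hpq. apply derivable_Iff, d_ax, A5.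
  - intros [Hp Hq]. now apply d_adj.
Qed.

Lemma derivable_St_Oc_mp p q :
  derivable G (St (Oc p q)) -> derivable G p -> derivable G (St q).
Proof.
  intros Hpq. apply d_mp.
  revert Hpq. apply derivable_Iff.
  apply Iff_St, Iff_Oc; [apply Iff_refl | apply Iff_St_St].
Qed.

End ProvableEquivalence.

(** * The Lindenbaum-Tarski model *)

Section Quotient.

Variables (T : Type) (R : T -> T -> Prop).
Hypotheses (R_refl : forall t, R t t) (R_sym : forall t u, R t u -> R u t)
  (R_trans : forall t u v, R t u -> R u v -> R t v).

Definition quot : Type := {P : T -> Prop | exists t, P = R t}.

Definition qcls (t : T) : quot := exist _ (R t) (ex_intro _ t eq_refl).

Definition qrepr (X : quot) : T :=
  proj1_sig (constructive_indefinite_description _ (proj2_sig X)).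

Lemma qcls_repr X : qcls (qrepr X) = X.
Proof.
  destruct X as [P HP]. unfold qrepr, qcls. simpl.
  destruct (constructive_indefinite_description _ HP) as [t ->].
  now apply subset_eq_compat.
Qed.

Lemma qcls_eq t u : qcls t = qcls u <-> R t u.
Proof.
  split.
  - intros E. apply (f_equal (fun X => proj1_sig X u)) in E. simpl in E.
    rewrite E. apply R_refl.
  - intros Rtu. apply subset_eq_compat.
    apply functional_extensionality. intros v.
    apply propositional_extensionality. split; eauto.
Qed.

Lemma qrepr_cls t : R (qrepr (qcls t)) t.
Proof. apply qcls_eq. apply qcls_repr. Qed.

Lemma qcls_surj X : exists t, X = qcls t.
Proof. exists (qrepr X). now rewrite qcls_repr. Qed.

End Quotient.

Section Lindenbaum.

Variable G : fm -> Prop.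

Definition lind_carrier : Type := quot fm (fun p q => derivable G (Iff p q)).

Definition cls : fm -> lind_carrier := qcls fm _.

Definition rpr : lind_carrier -> fm := qrepr fm _.

Definition lind_alg : alg := {|
  carrier := lind_carrier;
  aot := fun X Y => cls (Ot (rpr X) (rpr Y));
  aoc := fun X Y => cls (Oc (rpr X) (rpr Y));
  ast := fun X => cls (St (rpr X)) |}.

Definition lind_perp (u v : ext lind_alg) : Prop :=
  match u, v with
  | El X, El Y => derivable G (St (Oc (rpr X) (rpr Y)))
  | El X, Tt => derivable G (St (rpr X))
  | El X, Ff => derivable G (rpr X)
  | _, _ => False
  end.

Lemma cls_eq p q : cls p = cls q <-> derivable G (Iff p q).
Proof. apply qcls_eq; eauto using Iff_refl, Iff_sym, Iff_trans. Qed.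

Lemma rpr_cls p : derivable G (Iff (rpr (cls p)) p).
Proof.
  apply (qrepr_cls fm (fun p q => derivable G (Iff p q)));
    eauto using Iff_refl, Iff_sym, Iff_trans.
Qed.

Lemma cls_surj (X : lind_alg) : exists p, X = cls p.
Proof. apply qcls_surj. Qed.

Lemma cls_Ot p q : aot lind_alg (cls p) (cls q) = cls (Ot p q).
Proof. apply cls_eq, Iff_Ot; apply rpr_cls. Qed.

Lemma cls_Oc p q : aoc lind_alg (cls p) (cls q) = cls (Oc p q).
Proof. apply cls_eq, Iff_Oc; apply rpr_cls. Qed.

Lemma cls_St p : ast lind_alg (cls p) = cls (St p).
Proof. apply cls_eq, Iff_St, rpr_cls. Qed.

Lemma cls_hom : is_hom lind_alg cls.
Proof. split; [|split]; intros; symmetry; auto using cls_Ot, cls_Oc, cls_St. Qed.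

Lemma lind_perp_El p q : lind_perp (El (cls p)) (El (cls q)) <-> derivable G (St (Oc p q)).
Proof.
  pose proof (Iff_St _ _ _ (Iff_Oc _ _ _ _ _ (rpr_cls p) (rpr_cls q))).
  split; apply derivable_Iff; auto using Iff_sym.
Qed.

Lemma lind_perp_Tt p : lind_perp (El (cls p)) Tt <-> derivable G (St p).
Proof.
  pose proof (Iff_St _ _ _ (rpr_cls p)).
  split; apply derivable_Iff; auto using Iff_sym.
Qed.

Lemma lind_perp_Ff p : lind_perp (El (cls p)) Ff <-> derivable G p.
Proof. split; apply derivable_Iff; auto using Iff_sym, rpr_cls. Qed.

Ltac fold_cls :=
  repeat first [ rewrite cls_St in * | rewrite cls_Oc in * | rewrite cls_Ot in * ].

Lemma lind_model : Nw_model lind_alg lind_perp.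
Proof.
  unfold Nw_model, weak_N_algebra.
  repeat match goal with |- _ /\ _ => split end; intros;
    repeat match goal with X : carrier lind_alg |- _ =>
             let p := fresh "p" in destruct (cls_surj X) as [p ->] end;
    unfold aniff3, aniff, aiff, aimp in *; fold_cls;
    rewrite ?lind_perp_El, ?lind_perp_Tt, ?lind_perp_Ff in *;
    try apply cls_eq; try easy.
  - apply d_ax, A5.
  - apply Iff_Oc_comm.
  - apply Iff_sym, Iff_St_St.
  - apply Iff_exchange.
  - apply d_ax, A1.
  - now apply d_adj.
  - symmetry. apply derivable_Ot.
  - apply d_ax, A4.
  - eapply derivable_St_Oc_mp; eassumption.
  - apply d_ax, A7.
Qed.

Lemma lind_S_condition : S_condition lind_alg lind_perp.
Proof.
  intros X Z. destruct (cls_surj X) as [p ->], (cls_surj Z) as [q ->].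
  rewrite lind_perp_Tt, !lind_perp_Ff. intros Hnp Hp. exact (d_ecq G p q Hp Hnp).
Qed.

Lemma completeness phi : models_NwS G phi -> derivable G phi.
Proof.
  intros [L [GL valid]].
  apply lind_perp_Ff, (valid lind_alg lind_perp lind_model lind_S_condition cls cls_hom).
  intros g Lg. apply lind_perp_Ff, d_hyp, GL, Lg.
Qed.

End Lindenbaum.

Theorem theorem5p7 : forall (Gamma : fm -> Prop) (phi : fm),
  derivable Gamma phi <-> models_NwS Gamma phi.
Proof.
  intros Gamma phi. split.
  - apply soundness.
  - apply completeness.
Qed.
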